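(* For an integer $m\ge 0$ let $\mathbf{S}_m=\{1,\dots,m\}^2$ (empty for $m=0$). Two squares $(i,j),(i',j')$ are said to be on a common diagonal if $i-j=i'-j'$ or $i+j=i'+j'$. Let $R_{\mathbf{W}}(m,k)$ be the number of $k$-element subsets of $\{(i,j)\in\mathbf{S}_m: i+j \text{ even}\}$ with no two distinct elements on a common diagonal, and let $R_{\mathbf{K}}(m,k)$ be the analogous number for $\{(i,j)\in\mathbf{S}_m: i+j\text{ odd}\}$ (i.e., nonattacking placements of $k$ bishops on the white, resp. black, squares). Let $\pi(m)=1$ if $m$ is odd and $0$ otherwise. Then, for all integers $m\ge 1$ and $k\ge 1$, $$R_{\mathbf{W}}(m,k)=R_{\mathbf{W}}(m-1,k)+(m-k+\pi(m))R_{\mathbf{W}}(m-1,k-1),$$ $$R_{\mathbf{K}}(m,k)=R_{\mathbf{K}}(m-1,k)+(m-k+1-\pi(m))R_{\mathbf{K}}(m-1,k-1),$$ with $R_{\mathbf{W}}(m,0)=R_{\mathbf{K}}(m,0)=1$ and $R_{\mathbf{W}}(0,k)=R_{\mathbf{K}}(0,k)=\delta_{k0}$; moreover, for all integers $m,k\ge 0$, $$R_{\mathbf{W}}(m,k)=\sum_{j=0}^{k}\binom{\lceil m/2\rceil}{j}\left\{ {m-j \atop m-k}\right\},\qquad R_{\mathbf{K}}(m,k)=\sum_{j=0}^{k}\binom{\lfloor m/2\rfloor}{j}\left\{ {m-j \atop m-k}\right\}.$$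
   Context: $\delta_{ij}$ is the Kronecker delta. The Stirling numbers of the second kind $\left\{ {n \atop r}\right\}$ are used in the extended sense for all integers $n,r$: for $n,r\ge 0$ they are the usual Stirling numbers of the second kind; for $n,r\le 0$, $\left\{ {n \atop r}\right\}=\left[{-r \atop -n}\right]$, the unsigned Stirling number of the first kind; and $\left\{ {n \atop r}\right\}=0$ when one of $n,r$ is positive and the other negative. (Equivalently, the unique extension satisfying $\left\{ {n \atop r}\right\}=r\left\{ {n-1 \atop r}\right\}+\left\{ {n-1 \atop r-1}\right\}$ for all integers, as in Knuth's convention.) Binomial coefficients $\binom{x}{j}$ with integer $j\ge0$ are $x(x-1)\cdots(x-j+1)/j!$. *)

From HB Require Import structures.
From mathcomp Require Import all_boot all_order all_algebra.
Set Implicit Arguments. Unset Strict Implicit. Unset Printing Implicit Defensive.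
Import Order.TTheory GRing.Theory Num.Theory.

(* Board S_m = {1..m}^2, represented 0-based as 'I_m * 'I_m
   (square (i,j) stands for (i+1, j+1); parity and diagonals are unchanged). *)
Definition same_diag (m : nat) (x y : 'I_m * 'I_m) : bool :=
  (((x.1 : nat)%:Z - (x.2 : nat)%:Z == (y.1 : nat)%:Z - (y.2 : nat)%:Z)%R)
  || ((x.1 : nat) + x.2 == (y.1 : nat) + y.2)%N.

Definition nonattacking (m : nat) (A : {set 'I_m * 'I_m}) : bool :=
  [forall x in A, forall y in A, (x != y) ==> ~~ same_diag x y].

Definition white (m : nat) : {set 'I_m * 'I_m} :=
  [set x : 'I_m * 'I_m | ~~ odd ((x.1 : nat) + x.2)].
Definition black (m : nat) : {set 'I_m * 'I_m} :=
  [set x : 'I_m * 'I_m | odd ((x.1 : nat) + x.2)].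

Definition RW (m k : nat) : nat :=
  #|[set A : {set 'I_m * 'I_m} | [&& A \subset white m, #|A| == k & nonattacking A]]|.
Definition RK (m k : nat) : nat :=
  #|[set A : {set 'I_m * 'I_m} | [&& A \subset black m, #|A| == k & nonattacking A]]|.

Fixpoint stirling2n (n r : nat) : nat :=
  match n, r with
  | 0, 0 => 1
  | 0, _.+1 => 0
  | _.+1, 0 => 0
  | n'.+1, r'.+1 => r'.+1 * stirling2n n' r'.+1 + stirling2n n' r'
  end.

Fixpoint stirling1n (n k : nat) : nat :=
  match n, k with
  | 0, 0 => 1
  | 0, _.+1 => 0
  | _.+1, 0 => 0
  | n'.+1, k'.+1 => n' * stirling1n n' k'.+1 + stirling1n n' k'
  end.

(* Knuth's extension of {n \atop r} to all integers *)
Definition stirling2 (n r : int) : nat :=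
  match n, r with
  | Posz n', Posz r' => stirling2n n' r'
  | Posz 0, Negz _ => 0
  | Negz _, Posz 0 => 0
  | Negz n', Negz r' => stirling1n r'.+1 n'.+1   (* [ -r  -n ] *)
  | _, _ => 0
  end.

(* Following Goldman, Joichi and White, record the numbers N(B, k) of placements
   of k non-attacking bishops on a board B in the factorial polynomial
   sum_k N(B, k) x^(n - k), written with falling powers.  If B is a diagonal D
   together with a board B' each of whose anti-diagonals meets D, then k bishops on
   B' block exactly k squares of D, so N(B, k+1) = N(B', k+1) + (|D| - k) N(B', k):
   the polynomial of B, of degree n + 1, is that of B', of degree n, times
   x + |D| - n.  The squares of one colour
   are built up in this way from the corners inwards, two diagonals i - j = -t, t
   at a time, each contributing a factor x or x + 1.  This gives
   (x+1)^(ceil(m/2)) x^(floor(m/2)) for the white squares and the reverse exponents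
   for the black ones.  Comparing m with m + 1 gives the recurrences, and expanding
   x^n = sum_i S(n, i) x^(i) gives the Stirling formula. *)

From HB Require Import structures.
From mathcomp Require Import all_boot all_order all_algebra.
From mathcomp Require Import zify ring.
Import Order.TTheory GRing.Theory Num.Theory.
Set Implicit Arguments. Unset Strict Implicit. Unset Printing Implicit Defensive.

Lemma ffact_mulnDr x j d : x ^_ j * (x + d) = x ^_ j.+1 + (j + d) * x ^_ j.
Proof.
rewrite ffactnSr; case: (leqP j x) => [le_jx | lt_xj]; last by rewrite ffact_small // !mul0n muln0.
have -> : x + d = x - j + (j + d) by lia.
by rewrite mulnDr [_ * (j + d)]mulnC.
Qed.

Lemma sumn_ord_widen (F : nat -> nat) n N : n <= N -> (forall i, n <= i < N -> F i = 0) ->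
  \sum_(i < n) F i = \sum_(i < N) F i.
Proof.
move=> le_nN F0; rewrite (big_ord_widen N F le_nN) big_mkcond /=.
by apply: eq_bigr => i _; case: ifPn => // /negbTE lt_in; rewrite F0 // leqNgt lt_in /=.
Qed.

Lemma sum_ffact_at (a : nat -> nat) n j : j <= n ->
  \sum_(i < n.+1) a i * j ^_ i = \sum_(i < j) a i * j ^_ i + a j * j`!.
Proof.
move=> le_jn; rewrite -(@sumn_ord_widen (fun i => a i * j ^_ i) j.+1 n.+1) // => [|i /andP [lt_ji _]].
  by rewrite big_ord_recr /= ffactnn.
by rewrite ffact_small // muln0.
Qed.

(* Evaluating at x = i kills the terms of index > i, which recovers the
   coefficients one at a time. *)
Lemma ffact_coef_inj (a b : nat -> nat) n :
    (forall x, \sum_(i < n.+1) a i * x ^_ i = \sum_(i < n.+1) b i * x ^_ i) ->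
  forall i, i <= n -> a i = b i.
Proof.
move=> eq_ab; elim/ltn_ind=> i IH le_in.
have := eq_ab i; rewrite !sum_ffact_at //.
rewrite (eq_bigr (fun j : 'I_i => b j * i ^_ j)); last first.
  by move=> j _; rewrite IH // ltnW // (leq_trans (ltn_ord j)).
by move/addnI/eqP; rewrite eqn_pmul2r ?fact_gt0 // => /eqP.
Qed.

Definition ffpoly (f : nat -> nat) n x := \sum_(k < n.+1) f k * x ^_ (n - k).

Definition has_ffpoly (f : nat -> nat) n (P : nat -> nat) :=
  (forall k, n < k -> f k = 0) /\ forall x, ffpoly f n x = P x.

Lemma ffpolyE f n x : ffpoly f n x = \sum_(i < n.+1) f (n - i) * x ^_ i.
Proof.
rewrite /ffpoly (reindex_inj rev_ord_inj) /=; apply: eq_bigr => i _.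
by rewrite subSS subKn // -ltnS.
Qed.

Lemma ffpolyS f n x :
  ffpoly f n.+1 x = f 0 * x ^_ n.+1 + \sum_(k < n.+1) f k.+1 * x ^_ (n - k).
Proof. by rewrite /ffpoly big_ord_recl. Qed.

Lemma ffpoly_inj f g n : (forall x, ffpoly f n x = ffpoly g n x) ->
  forall k, k <= n -> f k = g k.
Proof.
move=> eq_fg k le_kn; rewrite -(subKn le_kn).
apply: (@ffact_coef_inj (fun i => f (n - i)) (fun i => g (n - i))); last exact: leq_subr.
by move=> x; rewrite -!ffpolyE.
Qed.

Lemma eq_has_ffpoly f n P Q : P =1 Q -> has_ffpoly f n P -> has_ffpoly f n Q.
Proof. by move=> eqPQ [f0 fP]; split=> // x; rewrite fP eqPQ. Qed.

Lemma has_ffpolyS u v n c P : has_ffpoly v n P -> n <= c -> u 0 = v 0 ->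
    (forall k, u k.+1 = v k.+1 + (c - k) * v k) ->
  has_ffpoly u n.+1 (fun x => P x * (x + (c - n))).
Proof.
move=> [v0 vP] le_nc u0 uS; split=> [[|k] // lt_nk | x].
  by rewrite uS !v0 ?muln0 // ltnW.
have vS : ffpoly v n.+1 x = \sum_(k < n.+1) v k * x ^_ (n.+1 - k).
  by rewrite /ffpoly big_ord_recr /= v0 // mul0n addn0.
rewrite -vP ffpolyS u0 /ffpoly big_distrl /=.
rewrite [RHS](eq_bigr (fun k : 'I_n.+1 => v k * x ^_ (n.+1 - k) + (c - k) * v k * x ^_ (n - k))); last first.
  move=> k _; have le_kn : k <= n by rewrite -ltnS.
  rewrite -mulnA ffact_mulnDr -subSn // mulnDr.
  have -> : n - k + (c - n) = c - k by lia.
  by rewrite mulnCA mulnA.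
rewrite big_split /= -vS ffpolyS -addnA -big_split /=.
by congr (_ + _); apply: eq_bigr => k _; rewrite uS mulnDl.
Qed.

Lemma has_ffpoly_rec f g n e P Q : has_ffpoly g n P -> has_ffpoly f n.+1 Q ->
    (forall x, Q x = P x * (x + e)) ->
  forall k, f k.+1 = g k.+1 + (n + e - k) * g k.
Proof.
move=> gP [f0 fQ] eQ k; case: (leqP k n) => [le_kn | lt_nk]; last first.
  by rewrite f0 // gP.1 ?gP.1 ?muln0 // ltnW.
pose u k := if k is k'.+1 then g k + (n + e - k') * g k' else g 0.
have [_ uP] := has_ffpolyS (u := u) gP (leq_addr e n) erefl (fun => erefl).
have -> : g k.+1 + (n + e - k) * g k = u k.+1 by [].
by apply: (@ffpoly_inj f u n.+1) => // x; rewrite fQ uP eQ addKn.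
Qed.

Lemma stirling2n_small n i : n < i -> stirling2n n i = 0.
Proof. by elim: n i => [|n IH] [|i] //= lt_ni; rewrite !IH ?muln0 // ltnW. Qed.

Lemma expn_stirling x n : x ^ n = \sum_(i < n.+1) stirling2n n i * x ^_ i.
Proof.
elim: n => [|n IH]; first by rewrite big_ord1.
have ffact_mulnr i : x ^_ i * x = x ^_ i.+1 + i * x ^_ i.
  by have := ffact_mulnDr x i 0; rewrite !addn0.
rewrite expnSr IH big_distrl /=.
rewrite (eq_bigr (fun i : 'I_n.+1 => stirling2n n i * x ^_ i.+1 + i * stirling2n n i * x ^_ i)); last first.
  by move=> i _; rewrite -mulnA ffact_mulnr mulnDr mulnCA mulnA.
rewrite big_split [RHS]big_ord_recl /= mul0n add0n.
rewrite [RHS](eq_bigr (fun i : 'I_n.+1 => stirling2n n i * x ^_ i.+1 + i.+1 * stirling2n n i.+1 * x ^_ i.+1)); last first.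
  by move=> i _; rewrite /= mulnDl mulnA addnC.
rewrite big_split /=; congr (_ + _).
rewrite big_ord_recl /= mul0n add0n big_ord_recr /= stirling2n_small // muln0 mul0n addn0.
by apply: eq_bigr => i _.
Qed.

Definition binom_stirling a m k := \sum_(j < k.+1) 'C(a, j) * stirling2n (m - j) (m - k).

Lemma ffpoly_binom_stirling a b x :
  (x + 1) ^ a * x ^ b = ffpoly (binom_stirling a (a + b)) (a + b) x.
Proof.
set m := a + b.
have powE j : x ^ (m - j) = \sum_(i < m.+1) stirling2n (m - j) i * x ^_ i.
  rewrite expn_stirling; apply: (@sumn_ord_widen (fun i => stirling2n (m - j) i * x ^_ i)).
    exact: leq_subr.
  by move=> i /andP [lt_i _]; rewrite stirling2n_small // mul0n.
rewrite expnDn big_distrl /= ffpolyE.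
rewrite (eq_bigr (fun j : 'I_a.+1 => \sum_(i < m.+1) 'C(a, j) * stirling2n (m - j) i * x ^_ i)); last first.
  move=> j _; have le_ja : j <= a by rewrite -ltnS.
  rewrite exp1n muln1 -mulnA -expnD (_ : a - j + b = m - j); last by rewrite /m; lia.
  by rewrite powE big_distrr /=; apply: eq_bigr => i _; rewrite mulnA.
rewrite exchange_big /=; apply: eq_bigr => i _; rewrite -big_distrl /=; congr (_ * _).
have le_im : i <= m by rewrite -ltnS.
pose F j := 'C(a, j) * stirling2n (m - j) i.
rewrite /binom_stirling subKn // (@sumn_ord_widen F a.+1 m.+1) => [|| j /andP [lt_aj _]].
- apply/esym/sumn_ord_widen => [|j /andP [lt_mij lt_jm]]; first exact: leq_subr.
  by rewrite /F stirling2n_small ?muln0 //; lia.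
- by rewrite /m ltnS leq_addr.
- by rewrite /F bin_small // mul0n.
Qed.

Lemma has_ffpoly_stirling f a m : a <= m ->
    has_ffpoly f m (fun x => (x + 1) ^ a * x ^ (m - a)) ->
  forall k, f k = \sum_(0 <= j < k.+1) 'C(a, j) * stirling2 (m%:Z - j%:Z)%R (m%:Z - k%:Z)%R.
Proof.
move=> le_am [f0 fP] k; rewrite big_mkord; case: (leqP k m) => [le_km | lt_mk].
  rewrite (@ffpoly_inj f (binom_stirling a m) m _ k le_km); last first.
    by move=> x; rewrite fP -{2 3}(subnKC le_am) -ffpoly_binom_stirling.
  apply: eq_bigr => j _; have le_jm : j <= m by apply: leq_trans le_km; rewrite -ltnS.
  by rewrite !subzn //; case: (m - j).
rewrite f0 // big1 // => j _; case: (leqP j a) => [le_ja | lt_aj]; last by rewrite bin_small.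
have -> : (m%:Z - k%:Z)%R = Negz (k - m).-1 by rewrite NegzE; lia.
by rewrite subzn ?(leq_trans le_ja) //; case: (m - j) => [|n] /=; rewrite muln0.
Qed.

Lemma card_ord_lt n k : k <= n -> #|[set i : 'I_n | i < k]| = k.
Proof.
move=> le_kn; have inj : injective (widen_ord le_kn) by move=> i j /(congr1 val) eq_ij; apply: val_inj.
rewrite -[RHS]card_ord -cardsT -(card_imset _ inj); apply: eq_card => i; rewrite inE.
apply/idP/imsetP => [lt_ik | [j _ ->]]; last exact: (ltn_ord j).
by exists (Ordinal lt_ik) => //; apply: val_inj.
Qed.

Section Board.
Context {m : nat}.
Local Notation square := ('I_m * 'I_m)%type.

Definition ddiag (x : square) : int := ((x.1 : nat)%:Z - (x.2 : nat)%:Z)%R.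
Definition adiag (x : square) : nat := x.1 + x.2.
Definition diag (z : int) : {set square} := [set x | ddiag x == z].

Definition placements (B : {set square}) k :=
  [set A : {set square} | [&& A \subset B, #|A| == k & nonattacking A]].
Definition nplace B k := #|placements B k|.

Lemma same_diagE (x y : square) : same_diag x y = (ddiag x == ddiag y) || (adiag x == adiag y).
Proof. by []. Qed.

Lemma ddiag_adiag_inj (x y : square) : ddiag x = ddiag y -> adiag x = adiag y -> x = y.
Proof.
move: x y => [i1 j1] [i2 j2]; rewrite /ddiag /adiag /= => eq_d eq_a.
by congr (_, _); apply: ord_inj; lia.
Qed.

Lemma same_diagC (x y : square) : same_diag x y = same_diag y x.
Proof. by rewrite !same_diagE eq_sym [adiag x == _]eq_sym. Qed.

Lemma nonattackingP (A : {set square}) :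
  reflect {in A &, forall x y, x != y -> ~~ same_diag x y} (nonattacking A).
Proof.
apply: (iffP forall_inP) => [na x y xA yA | na x xA].
  by move/forall_inP: (na x xA) => /(_ y yA) /implyP.
by apply/forall_inP => y yA; apply/implyP; apply: na.
Qed.

Lemma nonattacking_setU1 (A : {set square}) y : y \notin A ->
  nonattacking (y |: A) = nonattacking A && [forall x in A, ~~ same_diag x y].
Proof.
move=> yA; apply/nonattackingP/andP => [na | [/nonattackingP na /forall_inP ny]].
  split; first by apply/nonattackingP => x z xA zA; apply: na; rewrite setU1r.
  by apply/forall_inP => x xA; apply: na; rewrite ?setU11 ?setU1r ?(memPn yA).
move=> x z; rewrite !in_setU1 => /predU1P [-> | xA] /predU1P [-> | zA] nxz.
- by rewrite eqxx in nxz.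
- by rewrite same_diagC ny.
- exact: ny.
- exact: na.
Qed.

Lemma nplace0 B : nplace B 0 = 1.
Proof.
rewrite /nplace (_ : placements B 0 = [set set0]) ?cards1 //.
apply/setP => A; rewrite !inE cards_eq0 andbCA; case: eqP => [-> | //].
by rewrite sub0set; apply/nonattackingP => x; rewrite inE.
Qed.

Lemma has_ffpoly_nplace_set0 n : has_ffpoly (nplace set0) n (fun x => x ^_ n).
Proof.
have nplace_set0 k : nplace set0 k.+1 = 0.
  apply/eqP; rewrite cards_eq0; apply/eqP/setP => A; rewrite !inE subset0.
  by case: eqP => [-> | //]; rewrite cards0.
split=> [[|k] // | x].
by rewrite /ffpoly big_ord_recl nplace0 mul1n subn0 big1 ?addn0 // => k _; rewrite nplace_set0.
Qed.

Section PeelDiagonal.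
Variables (B : {set square}) (c : int).
Local Notation Bc := (B :&: diag c).
Local Notation B' := (B :\: diag c).
Hypothesis adiag_meets_diag : {in B', forall x, exists2 y, y \in Bc & adiag y = adiag x}.

(* Falls back to [x] itself when there is no partner, which never happens on [B']. *)
Definition partner x := odflt x [pick y in Bc | adiag y == adiag x].

Lemma partnerP x : x \in B' -> partner x \in Bc /\ adiag (partner x) = adiag x.
Proof.
move=> xB'; rewrite /partner; case: pickP => [y /andP [yBc /eqP] // | none].
have [y yBc eq_a] := adiag_meets_diag xB'.
by move: (none y); rewrite yBc eq_a eqxx.
Qed.

Definition free (A : {set square}) := Bc :\: [set partner x | x in A].

Lemma mem_free (A : {set square}) y : A \subset B' -> y \in Bc ->
  (y \in free A) = [forall x in A, ~~ same_diag x y].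
Proof.
move=> sAB' yBc; rewrite in_setD yBc andbT.
have yc : ddiag y = c by move: yBc; rewrite !inE => /andP [_ /eqP].
apply/idP/forall_inP => [ynA x xA | nsd]; last first.
  apply/imsetP => -[x xA eq_y]; have [_ pa] := partnerP (subsetP sAB' x xA).
  by move: (nsd x xA); rewrite same_diagE eq_y pa eqxx orbT.
have := subsetP sAB' x xA; rewrite !inE => /andP [xc _].
rewrite same_diagE yc (negbTE xc) /=; apply/negP => /eqP eq_a; case/imsetP: ynA.
have [pBc pa] := partnerP (subsetP sAB' x xA).
exists x => //; apply: ddiag_adiag_inj; last by rewrite pa.
by move: pBc; rewrite !inE yc => /andP [_ /eqP].
Qed.

Lemma card_free k (A : {set square}) : A \in placements B' k -> #|free A| = #|Bc| - k.
Proof.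
rewrite inE => /and3P [sAB' /eqP <- na].
have sub_p : [set partner x | x in A] \subset Bc.
  by apply/subsetP => _ /imsetP [x xA ->]; exact: (partnerP (subsetP sAB' x xA)).1.
rewrite cardsD (setIidPr sub_p) card_in_imset // => x z xA zA eq_p.
apply/eqP; apply: contraT => nxz; have := nonattackingP A na x z xA zA nxz.
rewrite same_diagE -(partnerP (subsetP sAB' x xA)).2 -(partnerP (subsetP sAB' z zA)).2.
by rewrite eq_p eqxx orbT.
Qed.

Lemma placements_disjoint k :
  placements B k :&: [set A : {set square} | [disjoint A & diag c]] = placements B' k.
Proof.
apply/setP => A; rewrite !inE subsetD -!andbA.
by case: [disjoint A & diag c]; rewrite ?andbT ?andbF.
Qed.

Lemma setU1_diag (A : {set square}) y : A \subset B' -> y \in diag c ->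
  (y |: A) :&: diag c = [set y].
Proof.
move=> sAB' yc; rewrite setIUl (setIidPl _) ?sub1set //.
by move: sAB'; rewrite subsetD -setI_eq0 => /andP [_ /eqP ->]; rewrite setU0.
Qed.

Definition free_pairs k :=
  [set p : {set square} * square | (p.1 \in placements B' k) && (p.2 \in free p.1)].

Lemma free_pairsP k (A : {set square}) y : (A, y) \in free_pairs k ->
  [/\ A \subset B', #|A| = k, nonattacking A, y \in Bc & y \notin A].
Proof.
rewrite !inE /= => /andP [/and3P [sAB' /eqP cardA na] /andP [_ yBc]].
split=> //; apply: contraL yBc => yA; move: (subsetP sAB' y yA).
by rewrite !inE => /andP [/negbTE ->]; rewrite andbF.
Qed.

Lemma placements_meeting_free k S y : S \in placements B k.+1 -> y \in S -> y \in diag c ->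
  (S :\ y, y) \in free_pairs k.
Proof.
rewrite inE => /and3P [sSB /eqP cardS naS] yS yc.
have /andP [na /forall_inP ny] : nonattacking (S :\ y) && [forall x in S :\ y, ~~ same_diag x y].
  by rewrite -nonattacking_setU1 ?setD11 // setD1K.
have sAB' : S :\ y \subset B'.
  apply/subsetP => x xSy; have xS := subsetP (subD1set S y) x xSy.
  rewrite inE (subsetP sSB x xS) andbT; apply/negP => xc; case/negP: (ny x xSy).
  by rewrite !inE in xc yc; rewrite same_diagE (eqP xc) (eqP yc) eqxx.
have yBc : y \in Bc by rewrite inE yc (subsetP sSB).
rewrite inE /= mem_free // inE sAB' na /= andbT; apply/andP; split.
  by rewrite -eqSS -cardS (cardsD1 y S) yS add1n.
exact/forall_inP.
Qed.

Lemma free_pairs_setU1 k A y : (A, y) \in free_pairs k ->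
  y |: A \in placements B k.+1 :\: [set A : {set square} | [disjoint A & diag c]].
Proof.
move=> /[dup] /free_pairsP [sAB' cardA na yBc yA].
rewrite inE /= => /andP [_]; rewrite mem_free // => ny.
have yc : y \in diag c by move: yBc; rewrite inE => /andP [].
rewrite !inE cardsU1 yA cardA eqxx nonattacking_setU1 // na ny !andbT; apply/andP; split.
  by apply/negP => disj; move: (disjointFr disj (setU11 y A)); rewrite yc.
apply/subsetP => x /setU1P [-> | /(subsetP sAB')]; first by move: yBc; rewrite inE => /andP [].
by rewrite inE => /andP [].
Qed.

Lemma placements_meeting k :
  placements B k.+1 :\: [set A : {set square} | [disjoint A & diag c]] =
  [set p.2 |: p.1 | p in free_pairs k].
Proof.
apply/setP => S; apply/idP/imsetP => [| [[A y] hAy ->]]; last exact: free_pairs_setU1.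
rewrite in_setD in_set -setI_eq0 => /andP [/set0Pn [y /setIP [yS yc]] hS].
by exists (S :\ y, y); [apply: placements_meeting_free | rewrite /= setD1K].
Qed.

Lemma free_pairs_inj k :
  {in free_pairs k &, injective (fun p : {set square} * square => p.2 |: p.1)}.
Proof.
move=> [A y] [A' y'] /free_pairsP [sAB' _ _ yBc yA] /free_pairsP [sAB'' _ _ yBc' yA'] /= eq_S.
have diagc z : z \in Bc -> z \in diag c by rewrite inE => /andP [].
have eq_y : y = y'.
  by apply/set1_inj; rewrite -(setU1_diag sAB' (diagc y yBc)) eq_S (setU1_diag sAB'' (diagc y' yBc')).
subst y'; congr (_, _).
by rewrite -(setU1K yA) eq_S setU1K.
Qed.

Lemma card_free_pairs k : #|free_pairs k| = nplace B' k * (#|Bc| - k).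
Proof.
rewrite -sum1_card (eq_bigl _ _ (fun p => in_set _ p)) /=.
rewrite -(pair_big_dep (mem (placements B' k)) (fun A => mem (free A)) (fun _ _ => 1)) /=.
rewrite (eq_bigr (fun _ => #|Bc| - k)) => [|A hA]; last by rewrite sum1_card (card_free hA).
by rewrite sum_nat_const.
Qed.

Lemma nplace_peel k : nplace B k.+1 = nplace B' k.+1 + (#|Bc| - k) * nplace B' k.
Proof.
rewrite /nplace -(cardsID [set A : {set square} | [disjoint A & diag c]]).
rewrite placements_disjoint placements_meeting card_in_imset ?card_free_pairs 1?mulnC //.
exact: free_pairs_inj.
Qed.

Lemma has_ffpoly_peel n P : has_ffpoly (nplace B') n P -> n <= #|Bc| ->
  has_ffpoly (nplace B) n.+1 (fun x => P x * (x + (#|Bc| - n))).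
Proof.
by move=> hP le_n; apply: (has_ffpolyS hP le_n); [rewrite !nplace0 | exact: nplace_peel].
Qed.

End PeelDiagonal.

(* Since i + j and i - j have the same parity, [corners t] is the union of the
   diagonals i - j = -t, t, -(t+2), t+2, ... *)
Definition corners t := [set x : square | (t <= `|ddiag x|)%N && (odd (adiag x) == odd t)].

Lemma corners_empty t : m <= t -> corners t = set0.
Proof.
move=> le_mt; apply/setP => -[i j]; rewrite !inE /ddiag /=.
by have := ltn_ord i; have := ltn_ord j; lia.
Qed.

Lemma corners_diag t z : `|z|%N = t -> corners t :&: diag z = diag z.
Proof. by move=> zt; apply/setP => -[i j]; rewrite !inE /ddiag /adiag /=; lia. Qed.

Lemma cornersD_diag t : 0 < t -> (corners t :\: diag (- t%:Z)) :&: diag t = diag t.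
Proof. by move=> t_gt0; apply/setP => -[i j]; rewrite !inE /ddiag /adiag /=; lia. Qed.

Lemma cornersD2 t : corners t :\: diag (- t%:Z) :\: diag t = corners t.+2.
Proof. by apply/setP => -[i j]; rewrite !inE /ddiag /adiag /=; lia. Qed.

Lemma white_corners : white m = corners 0.
Proof. by apply/setP => -[i j]; rewrite !inE /ddiag /adiag /=; lia. Qed.

Lemma black_corners : black m = corners 1.
Proof. by apply/setP => -[i j]; rewrite !inE /ddiag /adiag /=; lia. Qed.

Lemma cornersD0 : corners 0 :\: diag 0 = corners 2.
Proof. by apply/setP => -[i j]; rewrite !inE /ddiag /adiag /=; lia. Qed.

Lemma card_diag z : #|diag z| = m - `|z|.
Proof.
pose low (x : square) := if (0 <= z)%R then x.2 else x.1.
have inj : {in diag z &, injective low}.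
  move=> [i j] [i' j']; rewrite !inE /low /ddiag /= => /eqP dz /eqP dz'.
  by case: ifP => hz /(congr1 (@nat_of_ord m)) eq_l; congr (_, _); apply: ord_inj; lia.
rewrite -(card_in_imset inj) -(card_ord_lt (leq_subr `|z| m)); apply: eq_card => k; rewrite inE.
apply/imsetP/idP => [[[i j]] | lt_k]; rewrite /low.
  by rewrite inE /ddiag /= => /eqP dz ->; have := ltn_ord i; have := ltn_ord j; case: ifP; lia.
have lt_kz : k + `|z| < m by lia.
case: (boolP (0 <= z)%R) => hz; [exists (Ordinal lt_kz, k) | exists (k, Ordinal lt_kz)];
  by rewrite ?inE /ddiag /= ?(negbTE hz) ?hz //; lia.
Qed.

Lemma corners_partner t z x : x \in corners t -> (`|z| <= t)%N -> odd `|z| = odd t ->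
  exists2 y, y \in diag z & adiag y = adiag x.
Proof.
move: x => [i j]; rewrite inE /ddiag /adiag /= => /andP [le_t /eqP odd_t] le_z odd_z.
have lt_p : (i + j + `|z|)./2 < m by have := ltn_ord i; have := ltn_ord j; lia.
have lt_q : (i + j - `|z|)./2 < m by have := ltn_ord i; have := ltn_ord j; lia.
case: (boolP (0 <= z)%R) => hz; [exists (Ordinal lt_p, Ordinal lt_q) | exists (Ordinal lt_q, Ordinal lt_p)];
  by rewrite ?inE /ddiag /adiag /=; lia.
Qed.

Lemma has_ffpoly_corners r : r <= m ->
  has_ffpoly (nplace (corners (m.+1 - r))) r (fun x => (x + 1) ^ r./2 * x ^ uphalf r).
Proof.
elim/ltn_ind: r => -[|[|r]] IH le_rm.
- rewrite subn0 corners_empty //.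
  exact: (eq_has_ffpoly _ (has_ffpoly_nplace_set0 0)).
- rewrite subSS subn0 corners_empty //.
  by apply: (eq_has_ffpoly _ (has_ffpoly_nplace_set0 1)) => x; rewrite ffactn1 mul1n expn1.
set t := m.+1 - r.+2; have t_gt0 : 0 < t by lia.
have card_t : #|diag t| = r.+1 by rewrite card_diag /t; lia.
have card_Nt : #|diag (- t%:Z)| = r.+1 by rewrite card_diag abszN /t; lia.
have := IH r (leqnSn r.+1) (ltnW (ltnW le_rm)).
rewrite (_ : m.+1 - r = t.+2); last by rewrite /t; lia.
rewrite -cornersD2 => hP.
have hP1 := has_ffpoly_peel _ hP; rewrite cornersD_diag // card_t subSnn in hP1.
have {hP1}hP2 := has_ffpoly_peel _ (hP1 _ (leqnSn r)).
rewrite corners_diag ?abszN // card_Nt subnn in hP2.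
apply: (eq_has_ffpoly _ (hP2 _ _ (leqnn _))) => [x | x | x].
- by rewrite /= addn0 !expnS; ring.
- rewrite inE => /andP [_ xt].
  by apply: (corners_partner xt); rewrite abszN.
- by rewrite cornersD2 => xt; apply: (corners_partner xt) => //=; lia.
Qed.

End Board.

Lemma RWE m : RW m = nplace (white m). Proof. by []. Qed.
Lemma RKE m : RK m = nplace (black m). Proof. by []. Qed.

Lemma has_ffpoly_white m : has_ffpoly (RW m) m (fun x => (x + 1) ^ uphalf m * x ^ m./2).
Proof.
rewrite RWE white_corners; case: m => [|m].
  by rewrite corners_empty //; exact: (eq_has_ffpoly _ (has_ffpoly_nplace_set0 0)).
have := has_ffpoly_corners (leqnSn m); rewrite subSn // subSnn -cornersD0.
move=> /(has_ffpoly_peel _); rewrite corners_diag // card_diag subn0 subSnn => hW.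
apply: (eq_has_ffpoly _ (hW _ (leqnSn m))) => [x /= | x].
  by rewrite !expnS; ring.
by rewrite inE => /andP [_ x0]; apply: (corners_partner x0).
Qed.

Lemma has_ffpoly_black m : has_ffpoly (RK m) m (fun x => (x + 1) ^ m./2 * x ^ uphalf m).
Proof. by rewrite RKE black_corners; have := has_ffpoly_corners (leqnn m); rewrite subSnn. Qed.

Lemma RW_recS m k : RW m.+1 k.+1 = RW m k.+1 + (m + odd m.+1 - k) * RW m k.
Proof.
apply: (has_ffpoly_rec (has_ffpoly_white m) (has_ffpoly_white m.+1)) => x /=.
by rewrite uphalf_half; case: (odd m); rewrite /= ?add0n ?add1n !expnS; ring.
Qed.

Lemma RK_recS m k : RK m.+1 k.+1 = RK m k.+1 + (m + ~~ odd m.+1 - k) * RK m k.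
Proof.
apply: (has_ffpoly_rec (has_ffpoly_black m) (has_ffpoly_black m.+1)) => x /=.
by rewrite uphalf_half negbK; case: (odd m); rewrite /= ?add0n ?add1n !expnS; ring.
Qed.

Lemma RW_stirling m k :
  RW m k = \sum_(0 <= j < k.+1) 'C(uphalf m, j) * stirling2 (m%:Z - j%:Z)%R (m%:Z - k%:Z)%R.
Proof.
apply: has_ffpoly_stirling; first by rewrite uphalfE; lia.
by apply: (eq_has_ffpoly _ (has_ffpoly_white m)) => x; rewrite (_ : m - uphalf m = m./2) //; lia.
Qed.

Lemma RK_stirling m k :
  RK m k = \sum_(0 <= j < k.+1) 'C(m./2, j) * stirling2 (m%:Z - j%:Z)%R (m%:Z - k%:Z)%R.
Proof.
apply: has_ffpoly_stirling; first by lia.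
by apply: (eq_has_ffpoly _ (has_ffpoly_black m)) => x; rewrite (_ : m - m./2 = uphalf m) //; lia.
Qed.

Local Open Scope ring_scope.

Lemma PoszB_mul (a b v : nat) : (a < b -> v = 0)%N -> ((a - b) * v)%N%:Z = (a%:Z - b%:Z) * v%:Z.
Proof.
rewrite PoszM; case: (leqP b a) => [le_ba _ | _ /(_ isT) ->]; first by rewrite subzn.
by rewrite !mulr0.
Qed.

Theorem theorem2p2 :
  (forall m k : nat, (1 <= m)%N -> (1 <= k)%N ->
     (RW m k)%:Z = (RW m.-1 k)%:Z
                   + ((m%:Z - k%:Z + (odd m)%:Z) * (RW m.-1 k.-1)%:Z)
  /\ (RK m k)%:Z = (RK m.-1 k)%:Z
                   + ((m%:Z - k%:Z + 1 - (odd m)%:Z) * (RK m.-1 k.-1)%:Z))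
  /\ (forall m : nat, RW m 0 = 1%N /\ RK m 0 = 1%N)
  /\ (forall k : nat, RW 0 k = (k == 0%N) :> nat /\ RK 0 k = (k == 0%N) :> nat)
  /\ (forall m k : nat,
        RW m k = (\sum_(0 <= j < k.+1) 'C(uphalf m, j) * stirling2 (m%:Z - j%:Z) (m%:Z - k%:Z))%N
     /\ RK m k = (\sum_(0 <= j < k.+1) 'C(m./2, j) * stirling2 (m%:Z - j%:Z) (m%:Z - k%:Z))%N).
Proof.
have RW0 m k : (m < k)%N -> RW m k = 0%N by move/(has_ffpoly_white m).1.
have RK0 m k : (m < k)%N -> RK m k = 0%N by move/(has_ffpoly_black m).1.
split; [|split; [|split]].
- move=> [|m] [|k] // _ _ /=; rewrite RW_recS RK_recS !PoszD !PoszB_mul.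
  + by split; congr (_ + _ * _); lia.
  + by move=> lt_k; rewrite RK0 //; lia.
  + by move=> lt_k; rewrite RW0 //; lia.
- by move=> m; rewrite RWE RKE !nplace0.
- by move=> [|k]; [rewrite RWE RKE !nplace0 | rewrite RW0 ?RK0].
- by move=> m k; rewrite RW_stirling RK_stirling.
Qed.
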